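(* Let $n\ge3$ be odd and $n-1<s\le n$. Then $$\max\{\operatorname{per}(I-A): A\in\tilde\omega_n^s\}=2^{(n-1)/2}.$$ The maximum is attained by $M_2\oplus\cdots\oplus M_2\oplus M_3$ with $(n-3)/2$ copies of $M_2=\begin{pmatrix}0&1\\1&0\end{pmatrix}$ and $M_3=\begin{pmatrix}0&1&0\\1&0&0\\0&s-(n-1)&0\end{pmatrix}$.
   Context: An $n\times n$ matrix is row substochastic if all entries are nonnegative and each row sum is at most $1$. $\sigma(A)$ is the sum of all entries of $A$, and $\tilde\omega_n^s$ is the set of $n\times n$ row substochastic matrices $A$ with $\sigma(A)=s$. $\oplus$ is block-diagonal direct sum. The permanent is $\operatorname{per}(M)=\sum_{\pi\in S_n}\prod_i m_{i\pi(i)}$, and $I$ is the identity matrix. *)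

From HB Require Import structures.
From mathcomp Require Import all_boot all_order all_algebra all_fingroup.
Set Implicit Arguments. Unset Strict Implicit. Unset Printing Implicit Defensive.
Import Order.TTheory GRing.Theory Num.Theory.
Local Open Scope ring_scope.

Definition per (R : comRingType) (n : nat) (M : 'M[R]_n) : R :=
  \sum_(p : 'S_n) \prod_(i < n) M i (p i).

Definition sigma (R : ringType) (n : nat) (A : 'M[R]_n) : R :=
  \sum_(i < n) \sum_(j < n) A i j.

Definition row_substochastic (R : numDomainType) (n : nat) (A : 'M[R]_n) : Prop :=
  (forall i j, 0 <= A i j) /\ (forall i, \sum_(j < n) A i j <= 1).

Definition in_omega_tilde (R : numDomainType) (n : nat) (s : R) (A : 'M[R]_n) : Prop :=
  row_substochastic A /\ sigma A = s.

(* M_2 (+) ... (+) M_2 (+) M_3, written entrywise (n odd):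
   indices 0..n-2 are grouped in pairs {2t,2t+1} carrying the M_2 blocks
   (the last pair {n-3,n-2} is the top-left M_2 inside M_3), and the last row
   of M_3 has the entry s-(n-1) at column n-2. *)
Definition extremal_mx (R : ringType) (n : nat) (s : R) : 'M[R]_n :=
  \matrix_(i < n, j < n)
    if [&& (i < n.-1)%N, (j < n.-1)%N, (i./2 == j./2)%N & (i != j :> nat)]
    then 1
    else if ((i == n.-1 :> nat) && (j == n.-2 :> nat)) then s - (n.-1)%:R else 0.

(* per (I - A) is affine in each row, and row i of I - A is e_i - a with a in the
   simplex of substochastic rows, whose vertices are 0 and the e_j.  Hence
   per (I - A) is at most its value at some matrix whose rows are e_i or
   e_i - e_(f i).  Expanding such a permanent, the surviving permutations are those
   that move a set S along f, so it is the alternating count of the f-stable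
   subsets S of the set D of rows of the second kind.  Splitting off a minimal
   nonempty stable set A (a cycle of f, of length at least 2, since a fixed point
   gives a zero row) multiplies the count by 1 + (-1)^|A|, which is 0 or 2; this
   gives the bound 2^(|D|/2), for every row substochastic A.  The condition on s
   only serves to put the block matrix into the class.  In I minus that matrix the
   last column is e_n, so only the diagonal entry of the last row contributes, and
   each M_2 block contributes per [[1,-1],[-1,1]] = 2. *)

From HB Require Import structures.
From mathcomp Require Import all_boot all_order all_algebra all_fingroup.
From mathcomp Require Import zify.
Set Implicit Arguments. Unset Strict Implicit. Unset Printing Implicit Defensive.
Import Order.TTheory GRing.Theory Num.Theory.
Local Open Scope ring_scope.

Section StableSets.
Variables (T : finType) (f : T -> T).

Definition fstable (S : {set T}) := f @: S == S.

Definition fstable_subsets (U : {set T}) :=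
  [set S : {set T} | (S \subset U) && fstable S].

Definition stable_signsum (R : pzRingType) (U : {set T}) : R :=
  \sum_(S in fstable_subsets U) (-1) ^+ #|S|.

Lemma fstable_mem (S : {set T}) x : fstable S -> x \in S -> f x \in S.
Proof. by move=> /eqP stS xS; rewrite -stS imset_f. Qed.

Lemma fstable_inj (S : {set T}) : fstable S -> {in S &, injective f}.
Proof. by move=> /eqP stS; apply/imset_injP; rewrite stS. Qed.

Lemma fstable0 : fstable set0.
Proof. by rewrite /fstable imset0. Qed.

Lemma fstableU (S A : {set T}) : fstable S -> fstable A -> fstable (S :|: A).
Proof. by rewrite /fstable imsetU => /eqP -> /eqP ->. Qed.

(* An injective self-map of a finite set is onto, so closure under [f] suffices. *)
Lemma fstable_sub_inj (S : {set T}) : {in S &, injective f} ->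
  (forall x, x \in S -> f x \in S) -> fstable S.
Proof.
move=> injS fS; rewrite /fstable eqEcard card_in_imset // leqnn andbT.
by apply/subsetP=> _ /imsetP [x xS ->]; apply: fS.
Qed.

Lemma fstableI (S A : {set T}) : fstable S -> fstable A -> fstable (S :&: A).
Proof.
move=> stS stA; apply: fstable_sub_inj.
  by apply: sub_in2 (fstable_inj stS) => x /setIP [].
by move=> x /setIP [xS xA]; rewrite inE (fstable_mem stS xS) (fstable_mem stA xA).
Qed.

Lemma fstableD (S A : {set T}) : fstable S -> fstable A -> A \subset S -> fstable (S :\: A).
Proof.
move=> stS stA AS; apply: fstable_sub_inj.
  by apply: sub_in2 (fstable_inj stS) => x /setDP [].
move=> x /setDP [xS xA]; rewrite inE (fstable_mem stS xS) andbT.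
apply: contra xA; rewrite -{1}(eqP stA) => /imsetP [z zA /(fstable_inj stS xS)].
by move=> /(_ (subsetP AS _ zA)) ->.
Qed.

Lemma fstable_subsets0 (U : {set T}) : set0 \in fstable_subsets U.
Proof. by rewrite inE sub0set fstable0. Qed.

Lemma stable_signsum_trivial (R : pzRingType) (U : {set T}) :
  fstable_subsets U \subset [set set0] -> stable_signsum R U = 1.
Proof.
move=> triv; rewrite /stable_signsum (big_pred1 set0) ?cards0 // => S.
apply/idP/eqP=> [/(subsetP triv)/set1P // | ->]; exact: fstable_subsets0.
Qed.

(* Minimality of [A] among the nonempty stable subsets of [U], in the form used:
   [A] is a cycle of [f], so any stable set either contains or misses it. *)
Definition fstable_atom (U A : {set T}) :=
  [/\ A \subset U, fstable A, A != set0 &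
      forall S, S \in fstable_subsets U -> (S :&: A == set0) || (A \subset S)].

Lemma fstable_atom_exists (U : {set T}) :
  ~~ (fstable_subsets U \subset [set set0]) -> exists A, fstable_atom U A.
Proof.
case/subsetPn=> S0 S0U /set1P/eqP S0n0.
have [|A /andP [AU A0] Amin] := @arg_minnP _ S0
  (fun S => (S \in fstable_subsets U) && (S != set0)) (fun S => #|S|).
  by rewrite S0U.
move: AU; rewrite inE => /andP [AU stA]; exists A; split=> // S.
rewrite inE => /andP [SU stS]; case: eqP => //= /eqP SA0.
have SAU : (S :&: A \in fstable_subsets U) && (S :&: A != set0).
  by rewrite inE fstableI // (subset_trans (subsetIl _ _) SU).
have /eqP <- : S :&: A == A by rewrite eqEcard subsetIr Amin.
exact: subsetIl.
Qed.

Lemma fstable_atom_card (U A : {set T}) : (forall x, x \in U -> f x != x) ->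
  fstable_atom U A -> (1 < #|A|)%N.
Proof.
move=> nofix [AU stA /set0Pn [a aA] _]; rewrite ltnNge.
apply/negP=> /card_le1_eqP eqA.
by have := nofix a (subsetP AU _ aA); rewrite -(eqA _ _ (fstable_mem stA aA) aA) eqxx.
Qed.

Lemma fstable_subsetsD_disjoint (U A S : {set T}) :
  S \in fstable_subsets (U :\: A) -> S :&: A = set0.
Proof.
rewrite inE => /andP [SUA _]; apply/setP=> x; rewrite !inE.
by apply/negP=> /andP [/(subsetP SUA)]; rewrite inE => /andP [/negP].
Qed.

Section Atom.
Variables (U A : {set T}).
Hypothesis atomA : fstable_atom U A.

Lemma fstable_subsets_atom : fstable_subsets U =
  fstable_subsets (U :\: A) :|: [set S :|: A | S in fstable_subsets (U :\: A)].
Proof.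
have [AU stA _ splitA] := atomA.
apply/setP=> S; rewrite in_setU; apply/idP/orP.
- move=> SU; have := splitA S SU; move: SU; rewrite inE => /andP [SU stS].
  case/orP=> [/eqP SA0 | AS].
    left; rewrite inE stS andbT; apply/subsetP=> x xS; rewrite inE (subsetP SU _ xS) andbT.
    apply/negP=> xA; have : x \in S :&: A by rewrite inE xS.
    by rewrite SA0 inE.
  right; apply/imsetP; exists (S :\: A); last first.
    by rewrite setDE setUIl [~: A :|: A]setUC setUCr setIT (setUidPl AS).
  by rewrite inE fstableD // setSD.
- case=> [|/imsetP [S' S'UA ->]].
    by rewrite !inE => /andP [SUA ->]; rewrite (subset_trans SUA) ?subsetDl.
  move: S'UA; rewrite !inE => /andP [S'UA stS'].
  by rewrite fstableU // subUset AU (subset_trans S'UA) ?subsetDl.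
Qed.

Lemma stable_signsum_split (R : comPzRingType) :
  stable_signsum R U = (1 + (-1) ^+ #|A|) * stable_signsum R (U :\: A).
Proof.
have [_ _ /set0Pn [a aA] _] := atomA.
set F := fstable_subsets (U :\: A).
have disjF S : S \in F -> S :&: A = set0 := @fstable_subsetsD_disjoint U A S.
have injA : {in F &, injective (fun S => S :|: A)}.
  have setUAK S : S \in F -> (S :|: A) :\: A = S.
    move=> /disjF SA0; rewrite setDUl setDv setU0.
    by apply/setDidPl; rewrite -setI_eq0 SA0.
  by move=> S S' SF S'F /= eSS'; rewrite -(setUAK S) // -(setUAK S') // eSS'.
have disjFA : [disjoint F & [set S :|: A | S in F]].
  rewrite -setI_eq0; apply/eqP/setP=> S; rewrite in_setI in_set0.
  apply/negP=> /andP [/disjF SA0 /imsetP [S' _ eS]].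
  have : a \in S :&: A by rewrite eS !inE aA orbT.
  by rewrite SA0 inE.
rewrite /stable_signsum fstable_subsets_atom -/F.
rewrite (eq_bigl [predU F & [set S :|: A | S in F]]) => [|S]; last by rewrite !inE.
rewrite bigU //= big_imset //= mulrDl mul1r mulr_sumr; congr (_ + _).
apply: eq_bigr => S /disjF SA0.
by rewrite cardsU SA0 cards0 subn0 exprD mulrC.
Qed.

End Atom.

Lemma stable_signsum_le (R : numDomainType) (U : {set T}) :
  (forall x, x \in U -> f x != x) -> stable_signsum R U <= 2 ^+ #|U|./2.
Proof.
elim: {U}_.+1 {-2}U (ltnSn #|U|) => // m IH U Um nofix.
have [triv|/fstable_atom_exists [A atomA]] := boolP (fstable_subsets U \subset [set set0]).
  by rewrite stable_signsum_trivial // exprn_ege1 // ler1n.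
have [AU _ _ _] := atomA.
have A2 := fstable_atom_card nofix atomA.
have AleU := subset_leq_card AU.
have cardUA : #|U :\: A| = (#|U| - #|A|)%N by rewrite cardsD (setIidPr AU).
have IHA : stable_signsum R (U :\: A) <= 2 ^+ (#|U| - #|A|)./2.
  rewrite -cardUA; apply: IH => [|x /setDP [xU _]]; last exact: nofix.
  rewrite cardUA; lia.
rewrite (stable_signsum_split atomA) -signr_odd.
case: odd; first by rewrite expr1 subrr mul0r exprn_ge0.
apply: le_trans (_ : 2 * 2 ^+ (#|U| - #|A|)./2 <= _).
  by rewrite expr0 -[1 + 1]/2%:R; apply: ler_wpM2l.
by rewrite -exprS ler_weXn2l ?ler1n //; lia.
Qed.

End StableSets.

Lemma sumr_delta (R : pzSemiRingType) (I : finType) (j : I) (F : I -> R) :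
  \sum_l (l == j)%:R * F l = F j.
Proof.
rewrite (bigD1 j) //= eqxx mul1r big1 ?addr0 // => l /negbTE ->.
exact: mul0r.
Qed.

Section VertexMatrices.
Variables (R : numDomainType) (n : nat).

Definition vertex_mx (D : {set 'I_n}) (f : 'I_n -> 'I_n) : 'M[R]_n :=
  \matrix_(i, l) ((l == i)%:R - (i \in D)%:R * (l == f i)%:R).

Definition moved (p : 'S_n) := [set i | p i != i].

Definition moves_along (D : {set 'I_n}) (f : 'I_n -> 'I_n) (p : 'S_n) :=
  [forall i, (p i == i) || ((i \in D) && (p i == f i))].

Section FixpointFree.
Variables (D : {set 'I_n}) (f : 'I_n -> 'I_n).
Hypothesis nofixD : forall i, i \in D -> f i != i.

Lemma vertex_mx_term (p : 'S_n) : \prod_i vertex_mx D f i (p i) =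
  if moves_along D f p then (-1) ^+ #|moved p| else 0.
Proof.
case: ifPn => [/forallP along | /forallPn [i]].
  rewrite (eq_bigr (fun i => if p i != i then -1 else 1)) => [|i _]; last first.
    rewrite mxE; have := along i; case: (p i =P i) => [-> _ | _ /andP [-> /eqP ->]].
      case: (boolP (i \in D)) => [iD | _]; last by rewrite mul0r subr0.
      by rewrite eq_sym (negbTE (nofixD iD)) mulr0 subr0.
    by rewrite ?eqxx mul1r sub0r.
  rewrite -big_mkcond /= (eq_bigl (fun i => i \in moved p)) ?prodr_const // => i.
  by rewrite inE.
rewrite negb_or => /andP [/negbTE pi_i pi_f].
rewrite (bigD1 i) //= mxE pi_i sub0r.
by case: (i \in D) pi_f => /= [/negbTE -> | _]; rewrite ?mulr0 ?mul0r oppr0 mul0r.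
Qed.

Lemma moved_inj : {in [set p | moves_along D f p] &, injective moved}.
Proof.
move=> p q; rewrite !inE => /forallP alp /forallP alq eM.
apply/permP=> x; have := alp x; have := alq x.
have : (x \in moved p) = (x \in moved q) by rewrite eM.
rewrite !inE; case: (p x =P x) => [->|_]; case: (q x =P x) => [->|_] //=.
by move=> _ /andP [_ /eqP ->] /andP [_ /eqP ->].
Qed.

Lemma fstable_moved (p : 'S_n) : moves_along D f p -> moved p \in fstable_subsets f D.
Proof.
move=> /forallP alp; have pf x : x \in moved p -> p x = f x.
  by rewrite inE => px; have := alp x; rewrite (negbTE px) => /andP [_ /eqP].
rewrite inE; apply/andP; split.
  by apply/subsetP=> x; rewrite inE => px; have := alp x; rewrite (negbTE px) => /andP [].
apply: fstable_sub_inj => [x y xm ym | x xm]; first by rewrite -!pf //; apply: perm_inj.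
rewrite -pf //; move: xm; rewrite !inE; apply: contraNN => /eqP ppx.
by apply/eqP; apply: perm_inj ppx.
Qed.

Lemma fstable_perm (S : {set 'I_n}) : S \in fstable_subsets f D ->
  exists2 p, moves_along D f p & moved p = S.
Proof.
rewrite inE => /andP [SD stS].
have injS : injective (fun x => if x \in S then f x else x).
  move=> x y /=; case xS: (x \in S); case yS: (y \in S) => //.
  - exact: fstable_inj stS _ _ xS yS.
  - by move=> e; have := fstable_mem stS xS; rewrite e yS.
  - by move=> e; have := fstable_mem stS yS; rewrite -e xS.
exists (perm injS).
  apply/forallP=> x; rewrite permE; case xS: (x \in S); last by rewrite eqxx.
  by rewrite (subsetP SD _ xS) eqxx orbT.
apply/setP=> x; rewrite inE permE; case xS: (x \in S); last by rewrite eqxx.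
exact: nofixD (subsetP SD _ xS).
Qed.

Lemma per_vertex_mx : per (vertex_mx D f) = stable_signsum f R D.
Proof.
rewrite /per /stable_signsum.
have -> : fstable_subsets f D = moved @: [set p | moves_along D f p].
  apply/setP=> S; apply/idP/imsetP => [/fstable_perm [p alp <-] | [p]].
    by exists p; rewrite ?inE.
  by rewrite inE => /fstable_moved /[swap] ->.
rewrite big_imset /=; last exact: moved_inj.
rewrite (eq_bigr _ (fun p _ => vertex_mx_term p)) -big_mkcond /=.
by apply: eq_bigl => p; rewrite inE.
Qed.

End FixpointFree.

Lemma per_vertex_mx_le D f : per (vertex_mx D f) <= 2 ^+ n./2.
Proof.
have [i /andP [iD /eqP fi] | nofix] := pickP [pred i | (i \in D) && (f i == i)].
  rewrite /per big1 ?exprn_ge0 // => p _.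
  by rewrite (bigD1 i) //= mxE iD fi mul1r subrr mul0r.
have nofixD i : i \in D -> f i != i by move=> iD; have /= := nofix i; rewrite iD => /= ->.
rewrite per_vertex_mx //; apply: le_trans (stable_signsum_le _ _) _ => //.
by rewrite ler_weXn2l ?ler1n // half_leq // (leq_trans (max_card _)) ?card_ord.
Qed.

End VertexMatrices.

Section Permanent.
Variables (R : comNzRingType) (n : nat).

Definition set_row (M : 'M[R]_n) (i : 'I_n) (v : 'I_n -> R) : 'M[R]_n :=
  \matrix_(k, l) if k == i then v l else M k l.

Lemma per_set_row M i v :
  per (set_row M i v) = \sum_l v l * per (set_row M i (fun k => (k == l)%:R)).
Proof.
have rest w (p : 'S_n) :
    \prod_(k | k != i) set_row M i w k (p k) = \prod_(k | k != i) M k (p k).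
  by apply: eq_bigr => k /negbTE ki; rewrite mxE ki.
rewrite /per; under [RHS]eq_bigr do rewrite mulr_sumr; rewrite exchange_big /=.
apply: eq_bigr => p _; rewrite (bigD1 i) //= mxE eqxx rest.
rewrite [RHS](eq_bigr (fun l => v l * (p i == l)%:R * \prod_(k | k != i) M k (p k)));
  last by move=> l _; rewrite (bigD1 i) //= mxE eqxx rest mulrA.
rewrite -mulr_suml -(sumr_delta (p i) v); congr (_ * _).
by apply: eq_bigr => l _; rewrite mulrC eq_sym.
Qed.

Lemma per_eq_off_row (M N : 'M[R]_n) r :
  (forall k, k != r -> forall l, M k l = N k l) -> M r r = N r r ->
  (forall k, k != r -> M k r = 0) -> per M = per N.
Proof.
move=> eqMN eqr colr; rewrite /per; apply: eq_bigr => p _.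
have [pr | pr] := eqVneq (p r) r.
  by apply: eq_bigr => k _; have [-> | kr] := eqVneq k r; [rewrite pr | apply: eqMN].
set k := (p^-1)%g r; have kr : k != r.
  by apply: contraNneq pr => e; rewrite -{1}e permKV.
by rewrite (bigD1 k) //= [RHS](bigD1 k) //= permKV -eqMN // colr // !mul0r.
Qed.

End Permanent.

Section RowReduction.
Variables (R : numDomainType) (n : nat).

Definition substochastic_row (M : 'M[R]_n) i := exists2 a : 'I_n -> R,
  (forall j, 0 <= a j) /\ \sum_j a j <= 1 & forall l, M i l = (l == i)%:R - a l.

Definition vertex_row (M : 'M[R]_n) i := exists (b : bool) (j : 'I_n),
  forall l, M i l = (l == i)%:R - b%:R * (l == j)%:R.

(* The permanent is affine in row [i], and [e_i - a] is a convex combination of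
   [e_i] and the [e_i - e_j]. *)
Lemma per_set_row_convex M i (a : 'I_n -> R) B :
  (forall j, 0 <= a j) -> \sum_j a j <= 1 ->
  (forall (b : bool) j,
     per (set_row M i (fun l => (l == i)%:R - b%:R * (l == j)%:R)) <= B) ->
  per (set_row M i (fun l => (l == i)%:R - a l)) <= B.
Proof.
move=> a0 a1 vertB; set C := fun l => per (set_row M i (fun k => (k == l)%:R)).
have vertC (b : bool) j :
    per (set_row M i (fun l => (l == i)%:R - b%:R * (l == j)%:R)) = C i - b%:R * C j.
  rewrite per_set_row; under eq_bigr do rewrite mulrBl -mulrA.
  by rewrite sumrB sumr_delta -mulr_sumr sumr_delta.
have Ci : C i <= B by have := vertB false i; rewrite vertC mul0r subr0.
have Cij j : C i - C j <= B by have := vertB true j; rewrite vertC mul1r.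
rewrite per_set_row; under eq_bigr do rewrite mulrBl; rewrite sumrB sumr_delta.
have -> : C i - \sum_l a l * C l =
          (1 - \sum_l a l) * C i + \sum_l a l * (C i - C l).
  under [X in _ = _ + X]eq_bigr do rewrite mulrBr.
  by rewrite sumrB -mulr_suml mulrBl mul1r addrA subrK.
apply: le_trans (_ : (1 - \sum_l a l) * B + \sum_l a l * B <= _).
  apply: lerD; first by apply: ler_wpM2l; rewrite ?subr_ge0.
  by apply: ler_sum => l _; apply: ler_wpM2l.
by rewrite -mulr_suml -mulrDl subrK mul1r.
Qed.

Lemma per_vertex_rows_le M : (forall i, vertex_row M i) -> per M <= 2 ^+ n./2.
Proof.
move=> /fin_all_exists [b /fin_all_exists [j Mbj]].
have -> : M = vertex_mx R [set i | b i] j.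
  by apply/matrixP=> i l; rewrite Mbj mxE inE.
exact: per_vertex_mx_le.
Qed.

Lemma per_substochastic_rows_le k M : (k <= n)%N ->
  (forall i : 'I_n, (i < k)%N -> substochastic_row M i) ->
  (forall i : 'I_n, (k <= i)%N -> vertex_row M i) -> per M <= 2 ^+ n./2.
Proof.
elim: k M => [|k IH] M kn sub vert; first by apply: per_vertex_rows_le => i; apply: vert.
set i0 : 'I_n := Ordinal kn.
have [a a_sub Ma] := sub i0 (ltnSn k).
have -> : M = set_row M i0 (fun l => (l == i0)%:R - a l).
  by apply/matrixP=> i l; rewrite mxE; case: eqP => [-> |].
case: a_sub => a0 a1; apply: per_set_row_convex => // b j.
apply: IH => [|i ik|i ki]; first exact: ltnW.
  have i_i0 : i != i0 by rewrite -val_eqE /= neq_ltn ik.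
  have [a' a'_sub Ma'] := sub i (ltnW ik).
  by exists a' => // l; rewrite mxE (negbTE i_i0).
have [/eqP -> | i_i0] := boolP (i == i0); first by exists b, j => l; rewrite mxE eqxx.
have [b' [j' Mi]] : vertex_row M i.
  by apply: vert; rewrite ltn_neqAle ki andbT eq_sym; rewrite -val_eqE in i_i0.
by exists b', j' => l; rewrite mxE (negbTE i_i0).
Qed.

Lemma per_one_sub_substochastic_le (A : 'M[R]_n) :
  row_substochastic A -> per (1%:M - A) <= 2 ^+ n./2.
Proof.
case=> A0 A1; apply: (@per_substochastic_rows_le n) => // [i _ | i].
  by exists (A i) => // l; rewrite !mxE eq_sym.
by rewrite leqNgt ltn_ord.
Qed.

End RowReduction.

Definition partner (i : nat) := if odd i then i.-1 else i.+1.

Lemma partner_double k : partner k.*2 = k.*2.+1.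
Proof. by rewrite /partner odd_double. Qed.

Lemma partner_doubleS k : partner k.*2.+1 = k.*2.
Proof. by rewrite /partner /= odd_double. Qed.

Lemma partner_neq i : partner i != i.
Proof. by rewrite /partner; case: odd (odd_double_half i); lia. Qed.

Lemma partner_lt m i : odd m -> (i < m.-1)%N -> (partner i < m.-1)%N.
Proof.
move=> om; have := odd_double_half m; have := odd_double_half i.
by rewrite /partner om; case: odd => /=; move: i./2 m./2; lia.
Qed.

Lemma extremal_pair_cond m i j : odd m -> (i < m.-1)%N ->
  [&& (i < m.-1)%N, (j < m.-1)%N, i./2 == j./2 & i != j] = (j == partner i).
Proof.
move=> om ilt; have := odd_double_half m; have := odd_double_half i.
have := odd_double_half j; rewrite /partner om ilt.
case: odd; case: odd => /=; move: i./2 j./2 m./2; lia.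
Qed.

Section Extremal.
Variables (R : realFieldType) (n : nat) (s : R).
Hypotheses (n3 : (3 <= n)%N) (odd_n : odd n) (s_gt : (n.-1)%:R < s) (s_le : s <= n%:R).

Let E := extremal_mx n s.
Let c := s - (n.-1)%:R.

Lemma extremal_mx_pair (i j : 'I_n) : (i < n.-1)%N -> E i j = (j == partner i :> nat)%:R.
Proof.
move=> ilt; rewrite /E mxE extremal_pair_cond //; case: eqP => // _.
by rewrite ifF //; apply/negbTE; lia.
Qed.

Lemma extremal_mx_last (i j : 'I_n) : i = n.-1 :> nat ->
  E i j = if j == n.-2 :> nat then c else 0.
Proof. by move=> ie; rewrite /E mxE ifF ie ?eqxx //; lia. Qed.

Lemma extremal_rowsum_pair (i : 'I_n) : (i < n.-1)%N -> \sum_j E i j = 1.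
Proof.
move=> ilt; have pl : (partner i < n)%N by have := partner_lt odd_n ilt; lia.
rewrite (bigD1 (Ordinal pl)) //= extremal_mx_pair // eqxx big1 ?addr0 // => j ne.
by rewrite extremal_mx_pair //; case: eqP => // e; case/eqP: ne; apply: val_inj.
Qed.

Lemma extremal_rowsum_last (i : 'I_n) : i = n.-1 :> nat -> \sum_j E i j = c.
Proof.
move=> ie; have pl : (n.-2 < n)%N by lia.
rewrite (bigD1 (Ordinal pl)) //= extremal_mx_last // eqxx big1 ?addr0 // => j ne.
by rewrite extremal_mx_last //; case: eqP => // e; case/eqP: ne; apply: val_inj.
Qed.

Lemma extremal_in_omega : in_omega_tilde s E.
Proof.
have c_ge0 : 0 <= c by rewrite subr_ge0 ltW.
have c_le1 : c <= 1 by rewrite lerBlDl natr1 prednK //; lia.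
have ln : (n.-1 < n)%N by lia.
have lastP (i : 'I_n) : ~~ (i < n.-1)%N -> i = n.-1 :> nat by have := ltn_ord i; lia.
split; first split.
- move=> i j; have [ilt | /lastP ie] := boolP (i < n.-1)%N.
    by rewrite extremal_mx_pair ?ler0n.
  by rewrite extremal_mx_last //; case: ifP.
- move=> i; have [ilt | /lastP ie] := boolP (i < n.-1)%N.
    by rewrite extremal_rowsum_pair.
  by rewrite extremal_rowsum_last.
rewrite /sigma (bigD1 (Ordinal ln)) //= extremal_rowsum_last //.
rewrite (eq_bigr (fun _ => 1)); last first.
  move=> i ne; apply: extremal_rowsum_pair; apply: contraT => /lastP ie.
  by move: ne; rewrite -val_eqE /= ie eqxx.
by rewrite sumr_const cardC1 card_ord -[_ *+ _]mulr_natr mul1r subrK.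
Qed.

Let D := [set i : 'I_n | (i < n.-1)%N].
Let f (i : 'I_n) := insubd i (partner i).

Lemma extremal_partner_val (i : 'I_n) : (i < n.-1)%N -> val (f i) = partner i.
Proof. by move=> ilt; rewrite val_insubd ifT //; have := partner_lt odd_n ilt; lia. Qed.

(* Only the last row of [1 - E] is not a vertex row, but column [n-1] of
   [1 - E] is the unit vector, so that row contributes just its diagonal entry. *)
Lemma per_extremal_vertex : per (1%:M - E) = per (vertex_mx R D f).
Proof.
have ln : (n.-1 < n)%N by lia.
have lt_last (k : 'I_n) : k != Ordinal ln -> (k < n.-1)%N.
  by rewrite -val_eqE /=; have := ltn_ord k; lia.
have subE k l : (1%:M - E) k l = (k == l)%:R - E k l by rewrite !mxE.
apply: (per_eq_off_row (r := Ordinal ln)) => [k /lt_last klt l | | k /lt_last klt].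
- rewrite subE extremal_mx_pair // mxE inE klt mul1r eq_sym.
  by rewrite -[l == f k]val_eqE /= extremal_partner_val.
- rewrite subE extremal_mx_last // mxE inE ltnn mul0r eqxx /= ifN ?subr0 //; lia.
- have pk : (n.-1 == partner k) = false.
    by apply/negbTE; have := partner_lt odd_n klt; lia.
  have kl : (k == Ordinal ln) = false by apply/negbTE; rewrite -val_eqE /=; lia.
  by rewrite subE extremal_mx_pair //= kl pk subrr.
Qed.

Lemma stable_signsum_pairs k : (k.*2 <= n.-1)%N ->
  stable_signsum f R [set i : 'I_n | (i < k.*2)%N] = 2 ^+ k.
Proof.
elim: k => [|k IH] kl.
  rewrite stable_signsum_trivial //; apply/subsetP=> S; rewrite !inE.
  case/andP=> S0 _; apply/eqP/setP=> i; rewrite inE.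
  by apply/negP => /(subsetP S0); rewrite inE ltn0.
have a_lt : (k.*2 < n)%N by lia.
have b_lt : (k.*2.+1 < n)%N by lia.
set a := Ordinal a_lt; set b := Ordinal b_lt; set A := [set a; b].
have fa : f a = b by apply: val_inj; rewrite extremal_partner_val /= ?partner_double //; lia.
have fb : f b = a by apply: val_inj; rewrite extremal_partner_val /= ?partner_doubleS //; lia.
have stA : fstable f A by rewrite /fstable imsetU1 imset_set1 fa fb setUC.
have atomA : fstable_atom f [set i : 'I_n | (i < k.+1.*2)%N] A.
  split=> //; first by apply/subsetP=> x; rewrite !inE -!val_eqE /=; lia.
    by apply/set0Pn; exists a; rewrite !inE eqxx.
  move=> S; rewrite inE => /andP [_ stS].
  case: eqP => //= /eqP /set0Pn [x /setIP [xS xA]]; rewrite subUset !sub1set.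
  move: xA; rewrite !inE => /orP [] /eqP ex; subst x.
  - by rewrite xS -fa (fstable_mem stS xS).
  - by rewrite xS -fb (fstable_mem stS xS).
rewrite (stable_signsum_split atomA).
rewrite (_ : _ :\: A = [set i : 'I_n | (i < k.*2)%N]); last first.
  by apply/setP=> x; rewrite !inE -!val_eqE /=; lia.
rewrite IH; last lia.
rewrite cards2 (_ : a != b); last by rewrite -val_eqE /=; lia.
by rewrite expr2 mulrNN mul1r exprS.
Qed.

Lemma per_extremal : per (1%:M - E) = 2 ^+ (n.-1)./2.
Proof.
rewrite per_extremal_vertex per_vertex_mx; last first.
  by move=> i; rewrite inE => ilt; rewrite -val_eqE extremal_partner_val // partner_neq.
have n_pair : (n.-1)./2.*2 = n.-1 by have := odd_double_half n; rewrite odd_n; lia.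
by rewrite -stable_signsum_pairs n_pair.
Qed.

End Extremal.

Theorem mainTheorem15 (R : realFieldType) (n : nat) (s : R) :
  (3 <= n)%N -> odd n -> (n.-1)%:R < s -> s <= n%:R ->
  (forall A : 'M[R]_n, in_omega_tilde s A -> per (1%:M - A) <= 2 ^+ (n.-1)./2)
  /\ in_omega_tilde s (extremal_mx n s)
  /\ per (1%:M - extremal_mx n s) = 2 ^+ (n.-1)./2.
Proof.
move=> n3 odd_n s_gt s_le.
have half_pred : (n.-1)./2 = n./2 by have := odd_double_half n; rewrite odd_n; lia.
split; first by move=> A [subA _]; rewrite half_pred; apply: per_one_sub_substochastic_le.
by split; [apply: extremal_in_omega | apply: per_extremal].
Qed.
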